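(* Let $(V,E)$ be a task hypergraph, let $R \subseteq V$ be the set of its initial vertices, and let $W \subseteq V \setminus R$. Then the relation $\mathcal{R} \subseteq \mathrm{Dom}(R)\times\mathrm{Dom}(W)$ defined by $$\exists v_1 \in \mathrm{Dom}(t_1)\cdots\exists v_m\in\mathrm{Dom}(t_m),\; e_1(R_1,W_1)\wedge\cdots\wedge e_n(R_n,W_n),$$ where $\{v_1,\dots,v_m\} = V\setminus(R\cup W)$ with types $t_1,\dots,t_m$ and $\{e_1,\dots,e_n\}=E$ (each $e_k$ a task with read set $R_k$ and write set $W_k$), is total: for every $r\in\mathrm{Dom}(R)$ there exists $w\in\mathrm{Dom}(W)$ with $(r,w)\in\mathcal{R}$. In other words, every relation in $\mathrm{TG}(R,W)$ is total.
   Context: Variables are typed; each type $t$ has a domain $\mathrm{Dom}(t)$ (e.g. $\mathrm{Dom}(\mathtt{unit})=\{()\}$, $\mathrm{Dom}(\mathtt{bool})=\{\mathrm{true},\mathrm{false}\}$, $\mathrm{Dom}(\mathtt{int})=\mathbb{Z}$). For a finite set of variables $V$, $\mathrm{Dom}(V)=\prod_{v\in V}\mathrm{Dom}(t_v)$ if $V\neq\emptyset$ and $\{()\}$ if $V=\emptyset$. A task $e$ with read set $R$ and write set $W$ (finite, disjoint variable sets), written $e(R,W)$, is a relation $e\subseteq \mathrm{Dom}(R)\times\mathrm{Dom}(W)$ that is total: for all $r\in\mathrm{Dom}(R)$ there is $w\in\mathrm{Dom}(W)$ with $(r,w)\in e$. A directed hypergraph $(V,E)$ has hyperedges $e$ with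 a source vertex set $\mathrm{In}(e)$ and a target vertex set $\mathrm{Out}(e)$; a vertex $v$ is initial if $v\notin\mathrm{Out}(e)$ for all $e\in E$. A task hypergraph (TG) is a directed hypergraph whose vertices are variables and whose hyperedges are tasks, such that (i) it is acyclic, (ii) no vertex is isolated, (iii) each vertex is in $\mathrm{Out}(e)$ for at most one $e$, and (iv) for each task $e(R_e,W_e)\in E$, $\mathrm{In}(e)=R_e$ and $\mathrm{Out}(e)=W_e$. $\mathrm{TG}(R,W)$ denotes the set of all relations obtained from TGs as in the claim. *)

From mathcomp Require Import all_boot.
From Stdlib Require Import Relations.
Set Implicit Arguments. Unset Strict Implicit. Unset Printing Implicit Defensive.

(* Variables are the elements of a finite type V; variable v has
   domain D v (= Dom(t_v)). *)

(* Dom(S) for a finite set S of variables: assignments of a value to each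
   variable of S.  (For S = set0 this is the one-point type, as in the paper.) *)
Definition Dom (V : finType) (D : V -> Type) (S : {set V}) : Type :=
  forall x : {v : V | v \in S}, D (sval x).

Definition restr (V : finType) (D : V -> Type) (sigma : forall v, D v)
  (S : {set V}) : Dom D S := fun x => sigma (sval x).
Arguments restr {V D} sigma S x.

(* A directed hypergraph whose vertices are the variables V and whose
   hyperedges (of finite type Edge) are tasks: edge e has source set
   In e (= read set R_e), target set Out e (= write set W_e), and the
   relation task e ⊆ Dom(R_e) × Dom(W_e).  Condition (iv) of a TG is
   built in by typing the task relation on Dom(In e) × Dom(Out e). *)
Record hypergraph (V : finType) (D : V -> Type) := Hypergraph {
  Edge : finType;
  In : Edge -> {set V};
  Out : Edge -> {set V};
  task : forall e : Edge, Dom D (In e) -> Dom D (Out e) -> Prop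
}.

Definition hstep V D (G : @hypergraph V D) (u v : V) : Prop :=
  exists e : Edge G, u \in In e /\ v \in Out e.

Definition is_task V D (G : @hypergraph V D) (e : Edge G) : Prop :=
  [disjoint In e & Out e] /\
  forall r : Dom D (In e), exists w : Dom D (Out e), task r w.

Definition is_TG V D (G : @hypergraph V D) : Prop :=
  (forall e : Edge G, is_task e) /\
  (forall v, ~ clos_trans V (hstep G) v v) /\
  (forall v, exists e : Edge G, v \in In e \/ v \in Out e) /\
  (forall v (e1 e2 : Edge G), v \in Out e1 -> v \in Out e2 -> e1 = e2).

Definition initial V D (G : @hypergraph V D) : {set V} :=
  [set v | [forall e : Edge G, v \notin Out e]].

(* The relation of the TG from R to W: exists values for the remaining
   variables such that all tasks hold; phrased as existence of a full
   valuation agreeing with r on R and with w on W. *)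
Definition TG_rel V D (G : @hypergraph V D) (R W : {set V})
  (r : Dom D R) (w : Dom D W) : Prop :=
  exists sigma : forall v, D v,
    restr sigma R = r /\ restr sigma W = w /\
    forall e : Edge G, task (restr sigma (In e)) (restr sigma (Out e)).
Arguments TG_rel {V D} G R W r w.

From mathcomp Require Import all_boot.
From Stdlib Require Import Relations ClassicalEpsilon FunctionalExtensionality.
Set Implicit Arguments. Unset Strict Implicit. Unset Printing Implicit Defensive.

(* Remove a task of maximal rank (one more than the largest depth of its
   inputs in the acyclic dependency order), satisfy the remaining tasks by
   induction, and then overwrite the outputs of the removed task with values
   that its totality provides for the current inputs.  Only that task writes
   those variables and, by maximality, no remaining task reads them, so
   nothing else changes.  The same depth induction shows that every variable
   has an inhabited domain, which supplies the starting valuation. *)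

Section Override.

Variables (V : finType) (D : V -> Type).

Definition override (S : {set V}) (w : Dom D S) (sigma : forall v, D v) :
    forall v, D v :=
  fun v => match @idP (v \in S) with
           | ReflectT vS => w (exist _ v vS)
           | ReflectF _ => sigma v
           end.

Lemma restr_override (S : {set V}) (w : Dom D S) (sigma : forall v, D v) :
  restr (override w sigma) S = w.
Proof.
apply: functional_extensionality_dep => -[v vS]; rewrite /restr /override /=.
by destruct (@idP (v \in S)) as [vS'|]; rewrite ?(bool_irrelevance vS' vS).
Qed.

Lemma restr_override_disjoint (S T : {set V}) (w : Dom D S)
    (sigma : forall v, D v) :
  [disjoint T & S] -> restr (override w sigma) T = restr sigma T.
Proof.
move=> TS; apply: functional_extensionality_dep => -[v vT].
rewrite /restr /override /=; destruct (@idP (v \in S)) as [vS|] => //.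
by have := disjointFr TS vT; rewrite vS.
Qed.

End Override.

Section TaskHypergraph.

Variables (V : finType) (D : V -> Type) (G : hypergraph D).

Definition ancestors (v : V) : {set V} :=
  [set u | if excluded_middle_informative (clos_trans V (hstep G) u v)
           then true else false].

Lemma in_ancestors u v : u \in ancestors v <-> clos_trans V (hstep G) u v.
Proof. by rewrite inE; case: excluded_middle_informative. Qed.

Definition depth (v : V) : nat := #|ancestors v|.

Definition edge_rank (e : Edge G) : nat := \max_(u in In e) (depth u).+1.

Lemma initial_disjoint_out (e : Edge G) : [disjoint initial G & Out e].
Proof.
rewrite disjoint_subset; apply/subsetP => v; rewrite !inE.
by move/forallP/(_ e).
Qed.

Hypothesis acyclic : forall v, ~ clos_trans V (hstep G) v v.

Lemma depth_lt u v : hstep G u v -> depth u < depth v.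
Proof.
move=> uv; apply: proper_card; apply/properP; split.
  apply/subsetP => x /in_ancestors xu; apply/in_ancestors.
  exact: t_trans xu (t_step _ _ _ _ uv).
by exists u; [apply/in_ancestors/t_step | apply/negP => /in_ancestors/acyclic].
Qed.

Lemma edge_rank_lt (e' e : Edge G) v :
  v \in Out e' -> v \in In e -> edge_rank e' < edge_rank e.
Proof.
move=> vOut vIn; apply: (@leq_ltn_trans (depth v)).
  by apply/bigmax_leqP => u uIn; apply: depth_lt; exists e'.
exact: (@leq_bigmax_cond _ (fun u => u \in In e) (fun u => (depth u).+1) v vIn).
Qed.

Hypothesis single_writer :
  forall v (e1 e2 : Edge G), v \in Out e1 -> v \in Out e2 -> e1 = e2.

Lemma out_disjoint (e1 e2 : Edge G) : e1 != e2 -> [disjoint Out e1 & Out e2].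
Proof.
move=> ne; rewrite disjoint_subset; apply/subsetP => v v1; rewrite inE.
by apply/negP => v2; rewrite (single_writer v1 v2) eqxx in ne.
Qed.

Hypothesis tasks : forall e : Edge G, is_task e.

Variable r : Dom D (initial G).

Lemma domain_inhabited v : inhabited (D v).
Proof.
suff: forall n v, depth v < n -> inhabited (D v) by move=> /(_ _ v (ltnSn _)).
elim=> [//|n IH] {}v; rewrite ltnS => lt_vn.
case: (boolP (v \in initial G)) => [vI|]; first exact: inhabits (r (exist _ v vI)).
rewrite inE => /forallPn [e]; rewrite negbK => vOut.
have inputs (x : {u | u \in In e}) : inhabited (D (sval x)).
  by case: x => u uIn; apply: IH; apply: leq_trans lt_vn; apply: depth_lt; exists e.
have [w _] := (tasks e).2 (fun x => epsilon (inputs x) xpredT).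
exact: inhabits (w (exist _ v vOut)).
Qed.

Lemma tasks_satisfiable (F : {set Edge G}) :
  exists sigma : forall v, D v, restr sigma (initial G) = r /\
    forall e, e \in F -> task (restr sigma (In e)) (restr sigma (Out e)).
Proof.
have [n] := ubnP #|F|; elim: n F => // n IH F cardF.
have [->|[e0 e0F]] := set_0Vmem F.
  exists (override r (fun v => epsilon (domain_inhabited v) xpredT)).
  by split=> [|e]; [exact: restr_override | rewrite inE].
case: (@arg_maxnP _ e0 (fun e => e \in F) edge_rank e0F) => e eF e_max.
have [sigma [sigma_r sigma_tasks]] : exists sigma : forall v, D v,
    restr sigma (initial G) = r /\ forall e1, e1 \in F :\ e ->
    task (restr sigma (In e1)) (restr sigma (Out e1)).
  by apply: IH; move: cardF; rewrite (cardsD1 e) eF add1n ltnS.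
have [in_out_e total_e] := tasks e.
have [w task_w] := total_e (restr sigma (In e)).
have unread_e e1 : e1 \in F -> [disjoint In e1 & Out e].
  move=> e1F; rewrite disjoint_subset; apply/subsetP => v vIn; rewrite inE.
  apply/negP => vOut; have : edge_rank e1 <= edge_rank e := e_max e1 e1F.
  by rewrite leqNgt (edge_rank_lt vOut vIn).
exists (override w sigma); split.
  by rewrite restr_override_disjoint ?initial_disjoint_out.
move=> e1 e1F; have [-> | ne] := eqVneq e1 e.
  by rewrite restr_override restr_override_disjoint.
rewrite !restr_override_disjoint ?unread_e ?out_disjoint //.
by apply: sigma_tasks; rewrite !inE ne.
Qed.

End TaskHypergraph.

Theorem lemma1 (V : finType) (D : V -> Type) (G : @hypergraph V D)
  (W : {set V}) :
  is_TG G -> W \subset ~: initial G ->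
  forall r : Dom D (initial G),
    exists w : Dom D W, TG_rel G (initial G) W r w.
Proof.
move=> [tasks [acyclic [_ single_writer]]] _ r.
have [sigma [sigma_r sigma_tasks]] :=
  tasks_satisfiable acyclic single_writer tasks r [set: Edge G].
exists (restr sigma W), sigma; split=> //; split=> // e.
by apply: sigma_tasks; rewrite inE.
Qed.
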